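(* Let $(\mathcal C,\otimes,\mathbb I)$ be a monoidal category with pushouts and $(H,\Delta,\varepsilon)$ a coalgebra in $\mathcal C$. The induction functor $\mathsf{Ind}:\mathsf{Cov}^H\to\mathsf{PCom}^H$ restricts to a faithful functor $\mathsf{Ind}:\mathsf{Cov}^H_{pr}\to\mathsf{PCom}^H$, where $\mathsf{Cov}^H_{pr}$ is the full subcategory of proper covers.
   Context: $\mathcal C$ is treated as strict monoidal; the identity of an object $X$ is also written $X$. $\mathsf{Com}^H$ is the category of right $H$-comodules $(Y,\delta)$. A partial comodule datum is $(X,X\bullet H,\pi_X,\rho_X)$ with $\rho_X:X\to X\bullet H$ and $\pi_X:X\otimes H\to X\bullet H$ an epimorphism. For such a datum let: $(X\bullet H)\bullet H$ be the pushout of $\pi_X$ and $\rho_X\otimes H$, with coprojections $\rho_X\bullet H$ and $\pi_{X\bullet H}$; $X\bullet(H\otimes H)$ the pushout of $\pi_X$ and $X\otimes\Delta$, with coprojections $X\bullet\Delta$ and $\pi_{X,\Delta}$; $X\bullet(H\bullet H)$ the pushout of $\pi_{X,\Delta}$ and $\pi_X\otimes H$, with coprojections $\pi'_X$ and $\pi'_{X,\Delta}$. A geometric partial $H$-comodule is a datum such that (GP1) there is $X\bullet\varepsilon:X\bullet H\to X$ with $(X\bullet\varepsilon)\circ\rho_X=\mathrm{id}_X$ and $(X\bullet\varepsilon)\circ\pi_X=X\otimes\varepsilon$; (GP2) there is an isomorphism $\theta:X\bullet(H\bullet H)\to(X\bullet H)\bullet H$ with $\theta\circ\pi'_{X,\Delta}=\pi_{X\bullet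 H}$ and $(\rho_X\bullet H)\circ\rho_X=\theta\circ\pi'_X\circ(X\bullet\Delta)\circ\rho_X$. Morphisms $X\to X'$ are pairs $(f,f\bullet H)$ with $\rho_{X'}\circ f=(f\bullet H)\circ\rho_X$ and $\pi_{X'}\circ(f\otimes H)=(f\bullet H)\circ\pi_X$; category $\mathsf{PCom}^H$. $\mathsf{Cov}^H$ has objects $(Y,X,p)$ with $(Y,\delta_Y)\in\mathsf{Com}^H$, $X\in\mathcal C$, $p:Y\to X$ an epimorphism in $\mathcal C$; morphisms $(F,f):(Y,X,p)\to(Y',X',p')$ consist of a comodule morphism $F$ and a morphism $f$ in $\mathcal C$ with $p'\circ F=f\circ p$. The functor $\mathsf{Ind}$ sends $(Y,X,p)$ to $(X,X\bullet H,\pi_X,\rho_X)$ where $X\bullet H$ with coprojections $\rho_X,\pi_X$ is the pushout of $p$ and $(p\otimes H)\circ\delta_Y$ (a geometric partial comodule), and sends $(F,f)$ to $(f,f\bullet H)$, $f\bullet H$ being the morphism induced by the pushout property. A cover $(Y,X,p)$ is proper if $(p\otimes H)\circ\delta_Y:Y\to X\otimes H$ is a monomorphism in $\mathsf{Com}^H$, where $X\otimes H$ carries the coaction $X\otimes\Delta$. *)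

Set Implicit Arguments.
Unset Strict Implicit.

Record CatData := {
  Ob :> Type;
  Hom : Ob -> Ob -> Type;
  idm : forall A, Hom A A;
  comp : forall A B D, Hom B D -> Hom A B -> Hom A D }.
Arguments Hom {_} _ _.
Arguments idm {_} _.
Arguments comp {_ _ _ _} _ _.
Notation "g ∘ f" := (comp g f) (at level 40, left associativity).

Definition is_category (C : CatData) : Prop :=
  (forall (A B D E : C) (h : Hom D E) (g : Hom B D) (f : Hom A B),
      h ∘ (g ∘ f) = (h ∘ g) ∘ f) /\
  (forall (A B : C) (f : Hom A B), idm B ∘ f = f) /\
  (forall (A B : C) (f : Hom A B), f ∘ idm A = f).

Definition is_epi (C : CatData) (A B : C) (p : Hom A B) : Prop :=
  forall (Z : C) (u v : Hom B Z), u ∘ p = v ∘ p -> u = v.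

Record MonData (C : CatData) := {
  tens : C -> C -> C;
  tmor : forall A B A' B' : C, Hom A A' -> Hom B B' -> Hom (tens A B) (tens A' B');
  munit : C;
  ass : forall A B D : C, Hom (tens (tens A B) D) (tens A (tens B D));
  ass_inv : forall A B D : C, Hom (tens A (tens B D)) (tens (tens A B) D);
  lun : forall A : C, Hom (tens munit A) A;
  lun_inv : forall A : C, Hom A (tens munit A);
  run : forall A : C, Hom (tens A munit) A;
  run_inv : forall A : C, Hom A (tens A munit) }.
Arguments tens {_} _ _ _.
Arguments tmor {_} _ {_ _ _ _} _ _.
Arguments munit {_} _.
Arguments ass {_} _ {_ _ _}.
Arguments ass_inv {_} _ {_ _ _}.
Arguments lun {_} _ {_}.
Arguments lun_inv {_} _ {_}.
Arguments run {_} _ {_}.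
Arguments run_inv {_} _ {_}.

Section Monoidal.
Variables (C : CatData) (M : MonData C).
Local Notation "A ⊗ B" := (tens M A B) (at level 35).
Local Notation "f ⊗m g" := (tmor M f g) (at level 35).

Definition is_monoidal : Prop :=
  (forall A B : C, idm A ⊗m idm B = idm (A ⊗ B)) /\
  (forall (A1 A2 A3 B1 B2 B3 : C) (f : Hom A1 A2) (f' : Hom A2 A3)
          (g : Hom B1 B2) (g' : Hom B2 B3),
      (f' ∘ f) ⊗m (g' ∘ g) = (f' ⊗m g') ∘ (f ⊗m g)) /\
  (forall A B D : C, ass M ∘ ass_inv M = idm (A ⊗ (B ⊗ D))) /\
  (forall A B D : C, ass_inv M ∘ ass M = idm ((A ⊗ B) ⊗ D)) /\
  (forall A : C, lun M ∘ lun_inv M = idm A) /\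
  (forall A : C, lun_inv M ∘ lun M = idm (munit M ⊗ A)) /\
  (forall A : C, run M ∘ run_inv M = idm A) /\
  (forall A : C, run_inv M ∘ run M = idm (A ⊗ munit M)) /\
  (forall (A A' B B' D D' : C) (f : Hom A A') (g : Hom B B') (h : Hom D D'),
      ass M ∘ ((f ⊗m g) ⊗m h) = (f ⊗m (g ⊗m h)) ∘ ass M) /\
  (forall (A A' : C) (f : Hom A A'), lun M ∘ (idm (munit M) ⊗m f) = f ∘ lun M) /\
  (forall (A A' : C) (f : Hom A A'), run M ∘ (f ⊗m idm (munit M)) = f ∘ run M) /\
  (forall A B D E : C,
      @ass _ M A B (D ⊗ E) ∘ @ass _ M (A ⊗ B) D E =
      (idm A ⊗m @ass _ M B D E) ∘ @ass _ M A (B ⊗ D) E ∘ (@ass _ M A B D ⊗m idm E)) /\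
  (forall A B : C,
      (idm A ⊗m @lun _ M B) ∘ @ass _ M A (munit M) B = @run _ M A ⊗m idm B).

Definition is_coalgebra (H : C) (Δ : Hom H (H ⊗ H)) (ε : Hom H (munit M)) : Prop :=
  ass M ∘ (Δ ⊗m idm H) ∘ Δ = (idm H ⊗m Δ) ∘ Δ /\
  lun M ∘ (ε ⊗m idm H) ∘ Δ = idm H /\
  run M ∘ (idm H ⊗m ε) ∘ Δ = idm H.

Definition is_comodule (H : C) (Δ : Hom H (H ⊗ H)) (ε : Hom H (munit M))
  (Y : C) (δ : Hom Y (Y ⊗ H)) : Prop :=
  ass M ∘ (δ ⊗m idm H) ∘ δ = (idm Y ⊗m Δ) ∘ δ /\
  run M ∘ (idm Y ⊗m ε) ∘ δ = idm Y.

Definition is_comod_mor (H : C) (Y Y' : C) (δ : Hom Y (Y ⊗ H)) (δ' : Hom Y' (Y' ⊗ H))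
  (F : Hom Y Y') : Prop :=
  δ' ∘ F = (F ⊗m idm H) ∘ δ.

(* the cofree-type coaction X ⊗ Δ on X ⊗ H (transported along the associator) *)
Definition free_coact (H : C) (Δ : Hom H (H ⊗ H)) (X : C) : Hom (X ⊗ H) ((X ⊗ H) ⊗ H) :=
  ass_inv M ∘ (idm X ⊗m Δ).

Record Cover (H : C) := {
  cY : C;
  cδ : Hom cY (cY ⊗ H);
  cX : C;
  cp : Hom cY cX }.

Definition is_cover (H : C) (Δ : Hom H (H ⊗ H)) (ε : Hom H (munit M)) (c : Cover H) : Prop :=
  is_comodule Δ ε (cδ c) /\ is_epi (cp c).

Definition cov_coact (H : C) (c : Cover H) : Hom (cY c) (cX c ⊗ H) :=
  (cp c ⊗m idm H) ∘ cδ c.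

(* proper: (p ⊗ H) ∘ δ_Y is a monomorphism in Com^H *)
Definition is_proper (H : C) (Δ : Hom H (H ⊗ H)) (ε : Hom H (munit M)) (c : Cover H) : Prop :=
  is_comod_mor (cδ c) (free_coact Δ (cX c)) (cov_coact c) /\
  forall (Z : C) (δZ : Hom Z (Z ⊗ H)), is_comodule Δ ε δZ ->
  forall a b : Hom Z (cY c),
    is_comod_mor δZ (cδ c) a -> is_comod_mor δZ (cδ c) b ->
    cov_coact c ∘ a = cov_coact c ∘ b -> a = b.

Record CovHom (H : C) (c c' : Cover H) := {
  cF : Hom (cY c) (cY c');
  cf : Hom (cX c) (cX c');
  cF_comod : is_comod_mor (cδ c) (cδ c') cF;
  cF_square : cp c' ∘ cF = cf ∘ cp c }.

End Monoidal.

Record Pushouts (C : CatData) := {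
  po : forall A B D : C, Hom A B -> Hom A D -> C;
  po_in1 : forall (A B D : C) (f : Hom A B) (g : Hom A D), Hom B (po f g);
  po_in2 : forall (A B D : C) (f : Hom A B) (g : Hom A D), Hom D (po f g);
  po_desc : forall (A B D : C) (f : Hom A B) (g : Hom A D) (P : C),
      Hom B P -> Hom D P -> Hom (po f g) P }.
Arguments po {_} _ {_ _ _} _ _.
Arguments po_in1 {_} _ {_ _ _} _ _.
Arguments po_in2 {_} _ {_ _ _} _ _.
Arguments po_desc {_} _ {_ _ _} _ _ {_} _ _.

Definition has_pushouts (C : CatData) (P : Pushouts C) : Prop :=
  forall (A B D : C) (f : Hom A B) (g : Hom A D),
    po_in1 P f g ∘ f = po_in2 P f g ∘ g /\
    (forall (Q : C) (u : Hom B Q) (v : Hom D Q), u ∘ f = v ∘ g ->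
        po_desc P f g u v ∘ po_in1 P f g = u /\ po_desc P f g u v ∘ po_in2 P f g = v) /\
    (forall (Q : C) (u : Hom B Q) (v : Hom D Q) (h : Hom (po P f g) Q),
        u ∘ f = v ∘ g -> h ∘ po_in1 P f g = u -> h ∘ po_in2 P f g = v ->
        h = po_desc P f g u v).

Section Ind.
Variables (C : CatData) (M : MonData C) (P : Pushouts C) (H : C).

(* X • H, the pushout of p and (p ⊗ H) ∘ δ_Y ; coprojections ρ_X, π_X *)
Definition IndOb (c : Cover M H) : C := po P (cp c) (cov_coact c).
Definition Ind_rho (c : Cover M H) : Hom (cX c) (IndOb c) := po_in1 P (cp c) (cov_coact c).
Definition Ind_pi (c : Cover M H) : Hom (tens M (cX c) H) (IndOb c) :=
  po_in2 P (cp c) (cov_coact c).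

(* f • H : the map induced by the pushout property, with
   (f•H) ∘ ρ_X = ρ_X' ∘ f and (f•H) ∘ π_X = π_X' ∘ (f ⊗ H) *)
Definition Ind_bullet (c c' : Cover M H) (m : CovHom c c') : Hom (IndOb c) (IndOb c') :=
  po_desc P (cp c) (cov_coact c) (Ind_rho c' ∘ cf m) (Ind_pi c' ∘ tmor M (cf m) (idm H)).

Definition Ind_mor (c c' : Cover M H) (m : CovHom c c') :
  Hom (cX c) (cX c') * Hom (IndOb c) (IndOb c') :=
  (cf m, Ind_bullet m).
End Ind.

From Stdlib Require Import ProofIrrelevance.

Set Implicit Arguments.

(* A morphism (F, f) of covers is sent by Ind to (f, f • H), so it suffices
   that F is determined by f when the target cover is proper.  Indeed
   (p' ⊗ H) ∘ δ' ∘ F = (f ∘ p ⊗ H) ∘ δ only depends on f, and (p' ⊗ H) ∘ δ'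
   is a monomorphism of comodules while F is a comodule morphism. *)

Section ProperCovers.
Variables (C : CatData) (M : MonData C) (H : C).
Variables (Δ : Hom H (tens M H H)) (ε : Hom H (munit M)).

Lemma CovHom_ext (c c' : Cover M H) (m1 m2 : CovHom c c') :
  cF m1 = cF m2 -> cf m1 = cf m2 -> m1 = m2.
Proof.
  destruct m1 as [F1 f1 comod1 square1], m2 as [F2 f2 comod2 square2].
  simpl; intros <- <-.
  rewrite (proof_irrelevance _ comod1 comod2),
          (proof_irrelevance _ square1 square2).
  reflexivity.
Qed.

Hypotheses (HC : is_category C) (HM : is_monoidal M).

Lemma cov_coact_CovHom (c c' : Cover M H) (m : CovHom c c') :
  cov_coact c' ∘ cF m = tmor M (cf m ∘ cp c) (idm H) ∘ cδ c.
Proof.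
  destruct HC as [comp_assoc [comp_id_l _]].
  destruct HM as [_ [tmor_comp _]].
  unfold cov_coact.
  rewrite <- comp_assoc, (cF_comod m), comp_assoc, <- tmor_comp, comp_id_l,
          (cF_square m).
  reflexivity.
Qed.

Lemma CovHom_eq_of_proper (c c' : Cover M H) (m1 m2 : CovHom c c') :
  is_comodule Δ ε (cδ c) -> is_proper Δ ε c' -> cf m1 = cf m2 -> m1 = m2.
Proof.
  intros comod_c [_ coact_mono] Ef.
  apply CovHom_ext; [|exact Ef].
  apply (coact_mono _ (cδ c) comod_c); [apply cF_comod | apply cF_comod |].
  rewrite !cov_coact_CovHom, Ef.
  reflexivity.
Qed.

End ProperCovers.

Theorem corollary2p13
  (C : CatData) (M : MonData C) (P : Pushouts C)
  (HC : is_category C) (HM : is_monoidal M) (HP : has_pushouts P)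
  (H : C) (Δ : Hom H (tens M H H)) (ε : Hom H (munit M))
  (Hcoalg : is_coalgebra Δ ε)
  (c c' : Cover M H)
  (Hc : is_cover Δ ε c) (Hc' : is_cover Δ ε c')
  (Hpc : is_proper Δ ε c) (Hpc' : is_proper Δ ε c')
  (m1 m2 : CovHom c c') :
  Ind_mor P m1 = Ind_mor P m2 -> m1 = m2.
Proof.
  intros E.
  apply (CovHom_eq_of_proper HC HM m1 m2 (proj1 Hc) Hpc').
  exact (f_equal fst E).
Qed.
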